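(* Let $\mathscr L$ and $\mathscr S$ be countable locally finite graphs with vertex sets $V_{\mathscr L}$, $V_{\mathscr S}$, and let $\pi:V_{\mathscr L}\to V_{\mathscr S}$ be surjective. Assume that there is a measurable way to assign to every infinite self-avoiding path $\gamma:\mathbb N\to V_{\mathscr S}$ an infinite self-avoiding path $\tilde\gamma:\{n_\gamma,n_\gamma+1,\dots\}\to V_{\mathscr L}$ (for some $n_\gamma\in\mathbb N$) such that $\pi(\tilde\gamma_m)=\gamma_m$ for every $m\ge n_\gamma$. For every $v\in V_{\mathscr S}$ let $p_v\in[0,1]$, and consider on $\mathscr S$ the random configuration where each vertex $v$ is retained independently with probability $p_v$. Let $\mathfrak X$ be a random subset of $V_{\mathscr L}$ such that the family $(\mathfrak X\cap\pi^{-1}(\{v\}))_{v\in V_{\mathscr S}}$ is independent and, for every $x\in V_{\mathscr L}$, $\mathbb P(x\in\mathfrak X)\ge p_{\pi(x)}$. Then the probability that there is an infinite path of retained vertices (elements of $\mathfrak X$) in $\mathscr L$ is at least the probability that there is an infinite path of retained vertices in $\mathscr S$.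
   Context: Graphs are simple and undirected; ''countable'' means finite or countably infinite; locally finite means each vertex has finitely many neighbours. A self-avoiding path visits no vertex twice. The space of infinite paths carries the topology of pointwise convergence (vertex sets discrete) and the associated Borel structure. An infinite path of retained vertices means an infinite self-avoiding path all of whose vertices are retained. *)

From HB Require Import structures.
From mathcomp Require Import all_boot all_order all_algebra.
From mathcomp Require Import all_classical all_reals all_analysis.
Set Implicit Arguments. Unset Strict Implicit. Unset Printing Implicit Defensive.
Import Order.TTheory GRing.Theory Num.Theory.
Local Open Scope classical_set_scope.
Local Open Scope ring_scope.

Definition simple_graph (V : Type) (adj : V -> V -> Prop) : Prop :=
  (forall x y, adj x y -> adj y x) /\ (forall x, ~ adj x x).

Definition locally_finite (V : Type) (adj : V -> V -> Prop) : Prop :=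
  forall x, finite_set [set y | adj x y].

Definition inf_sa_path (V : Type) (adj : V -> V -> Prop) (g : nat -> V) : Prop :=
  injective g /\ forall m, adj (g m) (g m.+1).

(* An infinite self-avoiding path defined on {n, n+1, ...}; the values of g
   below n are irrelevant. *)
Definition inf_sa_path_from (V : Type) (adj : V -> V -> Prop) (n : nat)
    (g : nat -> V) : Prop :=
  (forall m k, (n <= m)%N -> (n <= k)%N -> g m = g k -> m = k) /\
  (forall m, (n <= m)%N -> adj (g m) (g m.+1)).

Definition cylinders (V : Type) : set (set (nat -> V)) :=
  [set A | exists i v, A = [set g | g i = v]].
Arguments cylinders : clear implicits.

(* Borel sets of the space of infinite self-avoiding paths (subspace of V^N
   with the product of discrete topologies; for countable V its Borel
   sigma-algebra is generated by cylinders, and the subspace Borel sets are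
   the traces of these). *)
Definition path_measurable (V : Type) (adj : V -> V -> Prop)
    (A : set (nat -> V)) : Prop :=
  exists B, <<s cylinders V >> B /\ A = B `&` inf_sa_path adj.

(* The assignment gamma |-> (n_gamma, tilde gamma) is measurable: preimages of
   the generating events of the target space of paths on {n, n+1, ...}
   (disjoint union over n of path spaces) are measurable. *)
Definition lift_measurable (VS VL : Type) (adjS : VS -> VS -> Prop)
    (Phi : (nat -> VS) -> nat * (nat -> VL)) : Prop :=
  (forall n, path_measurable adjS
      [set g | inf_sa_path adjS g /\ (Phi g).1 = n]) /\
  (forall n i x, (n <= i)%N -> path_measurable adjS
      [set g | inf_sa_path adjS g /\ (Phi g).1 = n /\ (Phi g).2 i = x]).

Definition indep_sigma {d} {Omega : measurableType d} {R : realType}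
    (I : eqType) (P : probability Omega R) (F : I -> set (set Omega)) : Prop :=
  forall (s : seq I) (A : I -> set Omega), uniq s ->
    (forall i, i \in s -> F i (A i)) ->
    P (\bigcap_(i in [set i | i \in s]) A i) = (\prod_(i <- s) P (A i))%E.

Definition indep_events {d} {Omega : measurableType d} {R : realType}
    (I : eqType) (P : probability Omega R) (E : I -> set Omega) : Prop :=
  forall (s : seq I), uniq s ->
    P (\bigcap_(i in [set i | i \in s]) E i) = (\prod_(i <- s) P (E i))%E.

Definition fibre_sigma {Omega VL VS : Type} (X : Omega -> set VL)
    (pi : VL -> VS) (v : VS) : set (set Omega) :=
  <<s [set [set w | X w x] | x in [set x | pi x = v]] >>.

Definition has_inf_retained_path (V : Type) (adj : V -> V -> Prop)
    (Y : set V) : Prop :=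
  exists g, inf_sa_path adj g /\ forall m, Y (g m).

From HB Require Import structures.
From mathcomp Require Import all_boot all_order all_algebra.
From mathcomp Require Import all_classical all_reals all_analysis.
From mathcomp Require Import ring lra.
Import Order.TTheory GRing.Theory Num.Theory.
Local Open Scope classical_set_scope.
Local Open Scope ring_scope.
Set Implicit Arguments. Unset Strict Implicit. Unset Printing Implicit Defensive.

(** Pull the configuration [Y] of [S] back to [L], retaining [x] when [pi x] is
    retained.  For finitely many words of [L], each mapped injectively by [pi],
    the probability that some word is entirely retained is no larger for the
    pulled-back configuration than for [X].  This is proved fibre by fibre: given
    the other fibres, the event becomes "some vertex of a set C inside the fibre
    of v is retained", which has probability [p v] (or 0 if C is empty) for the
    pulled-back configuration and at least [p v] for [X], the fibre being
    independent of the others.  Monotone limits extend the comparison to countable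
    families of words.  An infinite retained path of [S] lifts to retained finite
    paths of [L] of every length starting among finitely many vertices, and by
    König's lemma these yield an infinite retained path of [L]. *)

Section real_probability.
Context d (T : measurableType d) (R : realType) (P : probability T R).

Definition Pr (A : set T) : R := fine (P A).

Lemma PrE A : measurable A -> P A = (Pr A)%:E.
Proof. by move=> mA; rewrite /Pr fineK // fin_num_measure. Qed.

Lemma Pr_ge0 A : 0 <= Pr A.
Proof. by rewrite /Pr fine_ge0 // measure_ge0. Qed.

Lemma Pr_le1 A : measurable A -> Pr A <= 1.
Proof. by move=> mA; rewrite -lee_fin -PrE // probability_le1. Qed.

Lemma PrT : Pr setT = 1.
Proof. by rewrite /Pr probability_setT. Qed.

Lemma Pr0 : Pr set0 = 0.
Proof. by rewrite /Pr measure0. Qed.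

Lemma le_Pr A B : measurable A -> measurable B -> A `<=` B -> Pr A <= Pr B.
Proof. by move=> mA mB AB; rewrite -lee_fin -!PrE // le_measure // inE. Qed.

Lemma PrU A B : measurable A -> measurable B -> A `&` B = set0 ->
  Pr (A `|` B) = Pr A + Pr B.
Proof.
move=> mA mB AB0; apply: EFin_inj.
by rewrite EFinD -!PrE ?measureU //; exact: measurableU.
Qed.

Lemma PrIC A B : measurable A -> measurable B ->
  Pr (A `&` ~` B) = Pr A - Pr (A `&` B).
Proof.
move=> mA mB; apply/eqP; rewrite eq_sym subr_eq addrC -PrU.
- by rewrite -setIUr setUCr setIT.
- exact: measurableI.
- by apply: measurableI => //; exact: measurableC.
- by rewrite setIACA setICr setI0.
Qed.

End real_probability.

Lemma indep_events_sigma d (T : measurableType d) (R : realType)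
    (P : probability T R) (I : eqType) (E : I -> set T) :
  indep_events P E -> indep_sigma P (fun i => [set E i]).
Proof.
move=> indE s A us sA.
rewrite (eq_big_seq (fun i => P (E i))) => [|i /sA -> //]; rewrite -indE //.
by congr (P _); apply: eq_bigcapr => i /sA ->.
Qed.

Section independence_from_the_rest.
Context d (T : measurableType d) (R : realType) (P : probability T R)
  (I : choiceType) (F : I -> set (set T)).
Hypotheses (F_meas : forall i, F i `<=` measurable)
  (F_setI : forall i, setI_closed (F i)) (F_indep : indep_sigma P F).

Definition others_sigma (v : I) : set (set T) :=
  <<s \bigcup_(u in [set u | u != v]) F u >>.

Let finite_products (v : I) : set (set T) :=
  [set E | exists (s : seq I) A, [/\ v \notin s, forall u, u \in s -> F u (A u)
                         & E = \bigcap_(u in [set` s]) A u]].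

Let finite_products_setI v : setI_closed (finite_products v).
Proof.
move=> _ _ [s1 [A1 [vs1 FA1 ->]]] [s2 [A2 [vs2 FA2 ->]]].
pose A u := if u \in s1 then (if u \in s2 then A1 u `&` A2 u else A1 u) else A2 u.
exists (s1 ++ s2), A; split.
- by rewrite mem_cat negb_or vs1.
- move=> u; rewrite /A mem_cat.
  case: (boolP (u \in s1)) => us1; case: (boolP (u \in s2)) => us2 //= _.
  + by apply: F_setI; [exact: FA1|exact: FA2].
  + exact: FA1.
  + exact: FA2.
- apply/seteqP; split => t /=.
    move=> [A1t A2t] u; rewrite /A /= mem_cat.
    case: (boolP (u \in s1)) => us1; case: (boolP (u \in s2)) => us2 //= _.
    + by split; [exact: A1t|exact: A2t].
    + exact: A1t.
    + exact: A2t.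
  move=> At; split=> u us; have := At u; rewrite /A /= mem_cat us ?orbT /=.
    by case: ifP => _ /(_ isT) // [].
  by case: ifP => _ /(_ isT) // [].
Qed.

Let finite_products_indep v K E : F v K -> finite_products v E ->
  Pr P (E `&` K) = Pr P E * Pr P K.
Proof.
move=> FK [s [A [vs FA ->]]].
have -> : [set` s] = [set` undup s] by apply/seteqP; split => u; rewrite /= mem_undup.
have vs' : v \notin undup s by rewrite mem_undup.
have FA' u : u \in undup s -> F u (A u) by rewrite mem_undup; exact: FA.
pose A' u := if u == v then K else A u.
have E_K : \bigcap_(u in [set` v :: undup s]) A' u =
           \bigcap_(u in [set` undup s]) A u `&` K.
  apply/seteqP; split => t /=.
    move=> At; split; last by have /= := At v; rewrite /A' mem_head eqxx; apply.
    move=> u us; have /= := At u; rewrite in_cons us orbT /A'.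
    by case: eqP => [uv|_]; [rewrite -uv us in vs' | apply].
  move=> [At Kt] u /=; rewrite in_cons /A'.
  by case: eqP => // _ /= us; exact: At.
have prodA' : (\prod_(u <- undup s) P (A' u) = \prod_(u <- undup s) P (A u))%E.
  by apply: eq_big_seq => u us; rewrite /A'; case: eqP => // uv; rewrite -uv us in vs'.
have IEK : P (\bigcap_(u in [set` undup s]) A u `&` K) =
           (P K * P (\bigcap_(u in [set` undup s]) A u))%E.
  have uvs : uniq (v :: undup s) by rewrite /= vs' undup_uniq.
  have FA'' u : u \in v :: undup s -> F u (A' u).
    by rewrite in_cons /A'; case: eqP => [->|_ /FA'] //.
  rewrite -E_K (F_indep uvs FA'') big_cons prodA' (F_indep (undup_uniq s) FA').
  by rewrite /A' eqxx.
have mA : measurable (\bigcap_(u in [set` undup s]) A u).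
  by rewrite bigcap_seq big_seq; apply: bigsetI_measurable => u /FA' /F_meas.
rewrite /Pr IEK fineM ?fin_num_measure //; first exact: mulrC.
exact: F_meas FK.
Qed.

Lemma indep_others v K E : F v K -> others_sigma v E ->
  Pr P (E `&` K) = Pr P E * Pr P K.
Proof.
move=> FK; have mK := F_meas FK.
pose H := [set E | measurable E /\ Pr P (E `&` K) = Pr P E * Pr P K].
have dH : dynkin H.
  split.
  - by split => //; rewrite setTI PrT mul1r.
  - move=> A [mA IA]; split; first exact: measurableC.
    rewrite setIC PrIC // setIC IA -[~` A]setTI PrIC // setTI PrT; ring.
  - move=> G tG HG; have mG n := (HG n).1.
    have mUG : measurable (\bigcup_n G n) by exact: bigcupT_measurable.
    split => //; apply: EFin_inj.
    rewrite EFinM -!PrE //; last exact: measurableI.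
    rewrite setI_bigcupl !measure_bigcup //; last 2 first.
    + by move=> n _; exact: measurableI.
    + exact: trivIset_setIr.
    rewrite (PrE P mK) muleC -nneseriesZl //; apply: eq_eseriesr => n _.
    change (P (G n `&` K) = ((Pr P K)%:E * P (G n))%E).
    rewrite PrE; last exact: measurableI.
    by rewrite (HG n).2 (PrE P (mG n)) EFinM muleC.
have prodH : finite_products v `<=` H.
  move=> E' pE'; split; last exact: finite_products_indep FK pE'.
  have [s [A [_ FA ->]]] := pE'.
  by rewrite bigcap_seq big_seq; apply: bigsetI_measurable => u /FA /F_meas.
move=> oE; suff [] : H E by [].
have lH : lambda_system setT H by exact/dynkin_lambda_system.
apply: (lambda_system_subset (@finite_products_setI v) lH prodH) => //.
apply: (sub_sigma_algebra2 _ oE) => A [u /= uv FA].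
exists [:: u], (fun=> A); split.
- by rewrite inE eq_sym.
- by move=> w; rewrite inE => /eqP ->.
- by apply/seteqP; split => [t At u' _ //|t /(_ u)]; apply; rewrite /= inE.
Qed.
End independence_from_the_rest.

Section thinning.
Context d (T : measurableType d) (R : realType) (P : probability T R)
  (G : set (set T)) (I : eqType) (D K : I -> set T) (p : R).
Hypotheses (sG_meas : <<s G >> `<=` measurable)
  (D_sG : forall i, <<s G >> (D i)) (K_meas : forall i, measurable (K i)).

Lemma Pr_thinned_union_ge B s : <<s G >> B ->
  (forall i, i \in s -> p <= Pr P (K i) /\
     forall E, <<s G >> E -> Pr P (E `&` K i) = Pr P E * Pr P (K i)) ->
  Pr P B + p * (Pr P (B `|` \big[setU/set0]_(i <- s) D i) - Pr P B) <=
  Pr P (B `|` \big[setU/set0]_(i <- s) (D i `&` K i)).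
Proof.
move=> sGB; elim: s => [|i s IH] hK.
  by rewrite !big_nil !setU0 subrr mulr0 addr0.
have [pK IK] := hK i (mem_head _ _).
have := IH (fun j js => hK j (@mem_behead _ (i :: s) j js)); rewrite mulrBr => IHs.
set C := B `|` \big[setU/set0]_(j <- s) D j in IHs *.
set U := \big[setU/set0]_(j <- s) (D j `&` K j) in IHs *.
have sGC : <<s G >> C.
  apply: (@measurableU _ (g_sigma_algebraType G)) => //.
  by apply: (@bigsetU_measurable _ (g_sigma_algebraType G)) => j _; exact: D_sG.
have sGE : <<s G >> (D i `\` C).
  by apply: (@measurableD _ (g_sigma_algebraType G)); [exact: D_sG|exact: sGC].
have mB := sG_meas sGB; have mC := sG_meas sGC; have mE := sG_meas sGE.
have mDi := sG_meas (D_sG i); have mKi := K_meas i.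
have mU : measurable U.
  by apply: bigsetU_measurable => j _; apply: measurableI => //; exact: sG_meas.
have splitDC : Pr P (B `|` (D i `|` \big[setU/set0]_(j <- s) D j)) =
               Pr P (D i `\` C) + Pr P C.
  rewrite -PrU //; last by rewrite setDE -setIA setICl setI0.
  by rewrite setUDl setDv setD0 /C setUCA.
have UD : U `<=` \big[setU/set0]_(j <- s) D j.
  by apply: (big_ind2 (fun A B : set T => A `<=` B)) => // ? ? ? ?; exact: setUSS.
have disj : ((D i `\` C) `&` K i) `&` (B `|` U) = set0.
  apply/seteqP; split => // t [[[_ Ct] _] BUt]; apply: Ct.
  by case: BUt => [Bt|/UD Ut]; [left|right].
have lowerU : Pr P ((D i `\` C) `&` K i) + Pr P (B `|` U) <=
              Pr P (B `|` ((D i `&` K i) `|` U)).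
  rewrite -(PrU P (measurableI _ _ mE mKi) (measurableU _ _ mB mU) disj).
  apply: le_Pr.
  - exact: measurableU (measurableI _ _ mE mKi) (measurableU _ _ mB mU).
  - exact: measurableU mB (measurableU _ _ (measurableI _ _ mDi mKi) mU).
  - by move=> t [[[Dt _] Kt]|[Bt|Ut]]; [right; left|left|right; right].
(* The new part [D i `\` C] of the union lies in [<<s G >>], so thinning it by
   the independent [K i] keeps at least the fraction [p] of it. *)
have := IK _ sGE; have : p * Pr P (D i `\` C) <= Pr P (D i `\` C) * Pr P (K i).
  by rewrite mulrC ler_wpM2l // Pr_ge0.
rewrite !big_cons splitDC; lra.
Qed.
End thinning.

Definition word_event (T : Type) (V : eqType) (Z : T -> set V) (W : set (seq V)) :
    set T :=
  [set t | exists2 w, W w & forall x, x \in w -> Z t x].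

Lemma word_event_measurable d (T : measurableType d) (V : countType)
    (Z : T -> set V) (W : set (seq V)) :
  (forall w x, W w -> x \in w -> measurable [set t | Z t x]) ->
  measurable (word_event Z W).
Proof.
move=> mZ.
have -> : word_event Z W = \bigcup_(w in W) \big[setI/setT]_(x <- w) [set t | Z t x].
  apply/seteqP; split => t [w Ww]; rewrite -?bigcap_seq => Zw.
    by exists w => //; rewrite -bigcap_seq.
  by exists w.
rewrite bigcup_mkcond; apply: countable_bigcupT_measurable => [|w].
  exact: countableP.
case: ifPn => // /set_mem Ww; rewrite big_seq.
by apply: bigsetI_measurable => x; exact: mZ.
Qed.

Lemma word_event_sigma (T : pointedType) (G : set (set T)) (V : countType)
    (Z : T -> set V) (W : set (seq V)) :
  (forall w x, W w -> x \in w -> <<s G >> [set t | Z t x]) ->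
  <<s G >> (word_event Z W).
Proof. exact: (@word_event_measurable _ (g_sigma_algebraType G)). Qed.

Section measure_limits.
Context d (T : measurableType d) (R : realType).
Local Open Scope ereal_scope.

Lemma measure_bigcup_nondecreasing_le (P : probability T R)
    (F : (set T)^nat) c :
  (forall n, measurable (F n)) -> nondecreasing_seq F ->
  (forall n, P (F n) <= c) -> P (\bigcup_n F n) <= c.
Proof.
move=> mF ndF Fc.
apply: cvge_to_le (nondecreasing_cvg_mu mF (bigcupT_measurable _ mF) ndF) _.
exact: nearW.
Qed.

Lemma measure_bigcap_nonincreasing_ge (P : probability T R)
    (F : (set T)^nat) c :
  (forall n, measurable (F n)) -> nonincreasing_seq F ->
  (forall n, c <= P (F n)) -> c <= P (\bigcap_n F n).
Proof.
move=> mF niF cF.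
have P0 : P (F 0%N) < +oo by rewrite (le_lt_trans (probability_le1 _ _)) ?ltry.
have := nonincreasing_cvg_mu P0 mF (bigcapT_measurable mF) niF.
move/cvge_to_ge; apply; exact: nearW.
Qed.

End measure_limits.

Definition enum_below {V : countType} (n : nat) : seq V := pmap pickle_inv (iota 0 n).

Lemma mem_enum_below (V : countType) n (x : V) :
  (x \in enum_below n) = (pickle x < n)%N.
Proof.
rewrite mem_pmap; apply/mapP/idP => [[k + /esym xk]|xn].
  by have := @pickle_invK V k; rewrite xk /= => ->; rewrite mem_iota.
by exists (pickle x); [rewrite mem_iota|rewrite pickleK_inv].
Qed.

Definition enum_below_in {V : countType} (A : set V) (n : nat) : seq V :=
  [seq x <- enum_below n | `[< A x >]].

Lemma mem_enum_below_in (V : countType) (A : set V) n x :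
  (x \in enum_below_in A n) = `[< A x >] && (pickle x < n)%N.
Proof. by rewrite mem_filter mem_enum_below. Qed.

Lemma word_event_enum (T : Type) (V : countType) (Z : T -> set V) (Wp : set (seq V)) :
  word_event Z Wp = \bigcup_n word_event Z [set` enum_below_in Wp n].
Proof.
apply/seteqP; split => t [w].
  move=> Ww Zw; exists (pickle w).+1 => //; exists w => //.
  have : w \in enum_below_in Wp (pickle w).+1.
    by rewrite mem_enum_below_in ltnSn andbT; exact/asboolP.
  exact.
move=> _ [w' + Zw']; rewrite [_ w']/mkset mem_enum_below_in.
by move=> /andP[/asboolP Ww' _]; exists w'.
Qed.

Lemma word_event_enum_nondecreasing (T : Type) (V : countType) (Z : T -> set V)
    (Wp : set (seq V)) :
  nondecreasing_seq (fun n => word_event Z [set` enum_below_in Wp n]).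
Proof.
move=> n m nm; apply/subsetPset => t [w /=]; rewrite mem_enum_below_in.
move=> /andP[Ww wn] Zw; exists w => //=.
by rewrite mem_enum_below_in Ww (leq_trans wn nm).
Qed.

Lemma uniq_map_inj_in (T1 T2 : eqType) (f : T1 -> T2) (s : seq T1) :
  uniq (map f s) -> {in s &, injective f}.
Proof.
elim: s => //= z s IH /andP[zs us] x y; rewrite !inE.
move=> /predU1P[->|xs] /predU1P[->|ys] // fxy.
- by move: zs; rewrite fxy map_f.
- by move: zs; rewrite -fxy map_f.
- exact: IH.
Qed.

Section fibres_of_words.
Context (VL : countType) (VS : eqType) (pi : VL -> VS).

Definition avoid_fibre (v : VS) (W : seq (seq VL)) : seq (seq VL) :=
  [seq w <- W | all (fun x => pi x != v) w].

Definition drop_fibre (v : VS) (W : seq (seq VL)) : seq (seq VL) :=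
  [seq [seq x <- w | pi x != v] | w <- W].

Definition fibre_letters (v : VS) (W : seq (seq VL)) : seq VL :=
  [seq x <- flatten W | pi x == v].

Lemma mem_avoid_fibre v W w :
  (w \in avoid_fibre v W) = all (fun x => pi x != v) w && (w \in W).
Proof. exact: mem_filter. Qed.

Lemma avoid_fibre_neq v W w x : w \in avoid_fibre v W -> x \in w -> pi x != v.
Proof. by rewrite mem_avoid_fibre => /andP[/allP + _]; apply. Qed.

Lemma drop_fibre_neq v W w x : w \in drop_fibre v W -> x \in w -> pi x != v.
Proof. by move=> /mapP[w' _ ->]; rewrite mem_filter => /andP[]. Qed.

Definition injective_words (V0 : seq VS) (W : seq (seq VL)) : Prop :=
  forall w, w \in W -> uniq (map pi w) /\ {subset map pi w <= V0}.

Lemma injective_words_nil W : injective_words [::] W -> forall w, w \in W -> w = [::].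
Proof. by move=> WV0 [//|x w] /WV0[_ /(_ (pi x))]; rewrite inE eqxx => /(_ isT). Qed.

Lemma injective_words_avoid v V0 W :
  injective_words (v :: V0) W -> injective_words V0 (avoid_fibre v W).
Proof.
move=> WV0 w; rewrite mem_avoid_fibre => /andP[/allP wv /WV0[uw sub]].
split => // u /mapP[x xw ->]; move: (sub _ (map_f pi xw)); rewrite inE.
by case/predU1P => // pxv; move: (wv x xw); rewrite pxv eqxx.
Qed.

Lemma injective_words_drop v V0 W :
  injective_words (v :: V0) W -> injective_words V0 (drop_fibre v W).
Proof.
move=> WV0 w' /mapP[w /WV0[uw sub] ->]; split.
  by apply: subseq_uniq uw; apply: map_subseq; exact: filter_subseq.
move=> u /mapP[x]; rewrite mem_filter => /andP[pxv xw ->].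
by move: (sub _ (map_f pi xw)); rewrite inE (negbTE pxv).
Qed.

Section configuration.
Context (T : Type) (Z : T -> set VL).

Lemma word_event_drop_fibre v W :
  word_event Z [set` drop_fibre v W] =
  word_event Z [set` avoid_fibre v W] `|`
  \big[setU/set0]_(x <- fibre_letters v W)
     word_event Z [set` drop_fibre v [seq w <- W | x \in w]].
Proof.
rewrite -bigcup_seq; apply/seteqP; split => t.
  move=> [_ /mapP[w wW ->] Zw].
  have [/hasP[x xw /eqP pxv]|/hasPn noxv] := boolP (has (fun x => pi x == v) w).
    right; exists x; first by rewrite /= mem_filter pxv eqxx; apply/flattenP; exists w.
    by exists [seq y <- w | pi y != v] => //; apply: map_f; rewrite mem_filter xw.
  left; exists w; last by move=> x xw; apply: Zw; rewrite mem_filter noxv.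
  by rewrite /= mem_avoid_fibre wW andbT; apply/allP => x /noxv.
case=> [[w + Zw]|[x _ [_ /mapP[w + ->] Zw]]].
  rewrite /= mem_avoid_fibre => /andP[/all_filterP wv wW].
  by exists w => //=; apply/mapP; exists w.
rewrite mem_filter => /andP[_ wW].
by exists [seq y <- w | pi y != v] => //; exact: map_f.
Qed.

Lemma word_event_fibre_sub v W : (forall w, w \in W -> uniq (map pi w)) ->
  word_event Z [set` avoid_fibre v W] `|`
  \big[setU/set0]_(x <- fibre_letters v W)
     (word_event Z [set` drop_fibre v [seq w <- W | x \in w]] `&` [set t | Z t x])
  `<=` word_event Z [set` W].
Proof.
move=> Wpi; rewrite -bigcup_seq => t.
case=> [[w + Zw]|[x /= + [[_ /mapP[w + ->] Zw] Zx]]].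
  by rewrite /= mem_avoid_fibre => /andP[_ wW]; exists w.
rewrite !mem_filter => /andP[/eqP pxv _] /andP[xw wW]; exists w => // y yw.
have [pyv|pyv] := eqVneq (pi y) v.
  by rewrite (uniq_map_inj_in (Wpi w wW) yw xw) // pyv pxv.
by apply: Zw; rewrite mem_filter pyv.
Qed.

End configuration.
End fibres_of_words.

Section fibre_comparison.
Context (R : realType) (VL VS : countType) (pi : VL -> VS) (p : VS -> R).
Context (dS : measure_display) (OmegaS : measurableType dS)
  (PS : probability OmegaS R) (Y : OmegaS -> set VS).
Hypotheses (Y_meas : forall v, measurable [set w | Y w v])
  (Y_prob : forall v, PS [set w | Y w v] = (p v)%:E)
  (Y_indep : indep_events PS (fun v => [set w | Y w v])).
Context (dL : measure_display) (OmegaL : measurableType dL)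
  (PL : probability OmegaL R) (X : OmegaL -> set VL).
Hypotheses (X_meas : forall x, measurable [set w | X w x])
  (X_indep : indep_sigma PL (fibre_sigma X pi))
  (X_prob : forall x, ((p (pi x))%:E <= PL [set w | X w x])%E).

Let YL (t : OmegaS) : set VL := pi @^-1` Y t.

Let YL_meas x : measurable [set t | YL t x].
Proof. exact: Y_meas. Qed.

Lemma Pr_word_event_split_S v (W : seq (seq VL)) :
  Pr PS (word_event YL [set` W]) =
  (1 - p v) * Pr PS (word_event YL [set` avoid_fibre pi v W]) +
  p v * Pr PS (word_event YL [set` drop_fibre pi v W]).
Proof.
pose F u := [set [set t | Y t u]].
have indY E : others_sigma F v E -> Pr PS (E `&` [set t | Y t v]) = Pr PS E * p v.
  move=> oE; rewrite (indep_others _ _ (indep_events_sigma Y_indep) _ oE) //.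
  - by rewrite /Pr Y_prob.
  - by move=> u _ ->.
  - by move=> u _ _ -> ->; rewrite setIid.
have sigmaY (W' : seq (seq VL)) : (forall w x, w \in W' -> x \in w -> pi x != v) ->
    others_sigma F v (word_event YL [set` W']).
  move=> W'v; apply: word_event_sigma => w x wW xw.
  by apply: sub_sigma_algebra; exists (pi x); [exact: W'v wW xw|].
have mY (W' : seq (seq VL)) : measurable (word_event YL [set` W']).
  by apply: word_event_measurable => w x _ _; exact: YL_meas.
have -> : word_event YL [set` W] =
    (word_event YL [set` drop_fibre pi v W] `&` [set t | Y t v]) `|`
    (word_event YL [set` avoid_fibre pi v W] `&` ~` [set t | Y t v]).
  apply/seteqP; split => t.
    move=> [w wW Zw]; have [Yt|nYt] := pselect (Y t v); [left|right]; split => //.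
      exists [seq x <- w | pi x != v]; first exact: map_f.
      by move=> x; rewrite mem_filter => /andP[_ /Zw].
    exists w => //; rewrite /= mem_avoid_fibre wW andbT.
    by apply/allP => x /Zw Yx; apply/eqP => pxv; apply: nYt; rewrite -pxv.
  case=> [[[_ /mapP[w wW ->] Zw] Yt]|[[w + Zw] _]].
    exists w => // x xw; have [pxv|pxv] := eqVneq (pi x) v.
      by rewrite /YL /preimage /= pxv.
    by apply: Zw; rewrite mem_filter pxv.
  by rewrite /= mem_avoid_fibre => /andP[_ wW]; exists w.
rewrite PrU; first last.
- by rewrite setIACA setICr setI0.
- by apply: measurableI => //; exact: measurableC.
- exact: measurableI.
rewrite setIC PrIC // setIC !indY; first ring.
- by apply: sigmaY => w x; exact: avoid_fibre_neq.
- by apply: sigmaY => w x; exact: drop_fibre_neq.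
Qed.

Let fibre_meas u : fibre_sigma X pi u `<=` measurable.
Proof.
apply: smallest_sub; first exact: sigma_algebra_measurable.
by move=> _ [x _ <-]; exact: X_meas.
Qed.

Lemma Pr_word_event_split_L v (W : seq (seq VL)) :
  (forall w, w \in W -> uniq (map pi w)) ->
  (1 - p v) * Pr PL (word_event X [set` avoid_fibre pi v W]) +
  p v * Pr PL (word_event X [set` drop_fibre pi v W]) <=
  Pr PL (word_event X [set` W]).
Proof.
move=> Wpi.
pose G := \bigcup_(u in [set u | u != v]) fibre_sigma X pi u.
have sG_meas : <<s G >> `<=` measurable.
  apply: smallest_sub; first exact: sigma_algebra_measurable.
  by move=> A [u _ /fibre_meas].
have sigmaX (W' : seq (seq VL)) : (forall w x, w \in W' -> x \in w -> pi x != v) ->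
    <<s G >> (word_event X [set` W']).
  move=> W'v; apply: word_event_sigma => w x wW xw.
  apply: sub_sigma_algebra; exists (pi x); first exact: W'v wW xw.
  by apply: sub_sigma_algebra; exists x.
pose D x := word_event X [set` drop_fibre pi v [seq w <- W | x \in w]].
pose B := word_event X [set` avoid_fibre pi v W].
have D_sG x : <<s G >> (D x) by apply: sigmaX => w y; exact: drop_fibre_neq.
have sGB : <<s G >> B by apply: sigmaX => w y; exact: avoid_fibre_neq.
have := Pr_thinned_union_ge (P := PL) (s := fibre_letters pi v W)
  sG_meas D_sG X_meas sGB.
rewrite -word_event_drop_fibre => thin.
rewrite (_ : _ + _ = Pr PL B +
  p v * (Pr PL (word_event X [set` drop_fibre pi v W]) - Pr PL B)); last first.
  by rewrite /B; ring.
apply: le_trans (thin (p v) _) _.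
  move=> x; rewrite mem_filter => /andP[/eqP pxv _]; split.
    by rewrite -lee_fin -PrE // -pxv.
  move=> E sGE; apply: (indep_others fibre_meas _ X_indep _ sGE).
  + by move=> u; exact: (@measurableI _ (g_sigma_algebraType _)).
  + by rewrite -pxv; apply: sub_sigma_algebra; exists x.
apply: le_Pr; [|exact: word_event_measurable|exact: word_event_fibre_sub].
apply: measurableU; first exact: word_event_measurable.
apply: bigsetU_measurable => x _; apply: measurableI => //.
exact: word_event_measurable.
Qed.

Lemma Pr_word_event_le (W : seq (seq VL)) : (forall w, w \in W -> uniq (map pi w)) ->
  Pr PS (word_event YL [set` W]) <= Pr PL (word_event X [set` W]).
Proof.
move=> Wpi; have : injective_words pi (flatten [seq map pi w | w <- W]) W.
  move=> w wW; split => [|u uw]; first exact: Wpi.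
  by apply/flattenP; exists (map pi w) => //; exact: map_f.
move: (flatten _) => V0; elim: V0 W {Wpi} => [|v V0 IH] W WV0.
  have [nilW|nilW] := boolP ([::] \in W).
    rewrite (_ : word_event X _ = setT) ?PrT; last first.
      by apply/seteqP; split => // t _; exists [::].
    by apply: Pr_le1; apply: word_event_measurable => w x _ _; exact: YL_meas.
  rewrite (_ : word_event YL _ = set0) ?Pr0 ?Pr_ge0 //.
  apply/seteqP; split => // t [w wW _].
  by rewrite -(injective_words_nil WV0 wW) wW in nilW.
have /andP[p0 p1] : 0 <= p v <= 1.
  by rewrite -lee_fin -Y_prob measure_ge0 /= -lee_fin -Y_prob probability_le1.
rewrite (Pr_word_event_split_S v).
apply: le_trans (Pr_word_event_split_L v (fun w wW => (WV0 w wW).1)).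
apply: lerD; apply: ler_wpM2l; rewrite ?subr_ge0 //; apply: IH.
  exact: injective_words_avoid.
exact: injective_words_drop.
Qed.

Lemma word_event_le (Wp : set (seq VL)) : (forall w, Wp w -> uniq (map pi w)) ->
  (PS (word_event YL Wp) <= PL (word_event X Wp))%E.
Proof.
move=> Wpi; have mY W' : measurable (word_event YL W').
  by apply: word_event_measurable => w x _ _; exact: YL_meas.
have mX W' : measurable (word_event X W') by exact: word_event_measurable.
rewrite word_event_enum; apply: measure_bigcup_nondecreasing_le => // [|n].
  exact: word_event_enum_nondecreasing.
apply: (@le_trans _ _ (PL (word_event X [set` enum_below_in Wp n]))).
  rewrite (PrE PS (mY _)) (PrE PL (mX _)) lee_fin.
  by apply: Pr_word_event_le => w; rewrite mem_enum_below_in => /andP[/asboolP /Wpi].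
rewrite le_measure ?inE // [X in _ `<=` X]word_event_enum.
by move=> t Wt; exists n.
Qed.

End fibre_comparison.

Lemma antitone_pigeonhole (A : eqType) (L : seq A) (P : A -> nat -> Prop) :
  (forall y n m, (m <= n)%N -> P y n -> P y m) ->
  (forall n, exists2 y, y \in L & P y n) -> exists2 y, y \in L & forall n, P y n.
Proof.
move=> anti PL.
suff [//|[N NL]] : (exists2 y, y \in L & forall n, P y n) \/
    exists N, forall y, y \in L -> ~ P y N.
  by have [y /NL] := PL N.
elim: L {PL} => [|y L [[z zL Pz]|[N NL]]].
- by right; exists 0%N.
- by left; exists z => //; rewrite inE zL orbT.
- have [Py|/existsNP[n nPy]] := pselect (forall n, P y n).
    by left; exists y; rewrite ?mem_head.
  right; exists (maxn N n) => z; rewrite inE => /predU1P[->|zL] Pz.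
    by apply: nPy; apply: anti Pz; exact: leq_maxr.
  by apply: (NL z zL); apply: anti Pz; exact: leq_maxl.
Qed.

Section konig.
Context (V : eqType) (adj : V -> V -> Prop) (Z : set V).
Let e : rel V := fun x y => `[< adj x y >].

Definition rooted_paths (roots : seq V) (n : nat) : set (seq V) :=
  [set s | exists x t,
    [/\ s = x :: t, x \in roots, (n <= size t)%N, uniq s & path e x t]].

Let Zpath (s : seq V) : Prop := [/\ uniq s, sorted e s & forall y, y \in s -> Z y].

Let extensible (s : seq V) : Prop :=
  forall n, exists2 t, (n <= size t)%N & Zpath (s ++ t).

Let Zpath_prefix s t : Zpath (s ++ t) -> Zpath s.
Proof.
case; rewrite cat_uniq => /and3P[us _ _] /cat_sorted2[ss _] Zst.
by split => // y ys; apply: Zst; rewrite mem_cat ys.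
Qed.

Lemma path_iota (f : nat -> V) k n :
  (forall m, (k <= m)%N -> adj (f m) (f m.+1)) ->
  path e (f k) [seq f i | i <- iota k.+1 n].
Proof.
elim: n k => //= n IH k fk; apply/andP; split; first exact/asboolP/fk.
by apply: IH => m km; apply: fk; exact: ltnW.
Qed.

Hypothesis lf : locally_finite adj.

Let extensible_rcons s : s != [::] -> extensible s ->
  exists y, extensible (rcons s y).
Proof.
case: s => // x s _ ext; have [L NL] := (finite_seqP _).1 (lf (last x s)).
suff [y _ ext_y] : exists2 y, y \in L & forall n,
    exists2 t, (n <= size t)%N & Zpath (rcons (x :: s) y ++ t).
  by exists y.
apply: antitone_pigeonhole => [y n m mn [t nt Zt]|n].
  by exists t => //; exact: leq_trans nt.
have [[|y t] //= nt [ust]] := ext n.+1.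
rewrite /sorted cat_path /= => /and3P[px /asboolP adj_y pt] Zst.
have yL : [set` L] y by rewrite -NL.
exists y => //.
exists t => //; rewrite cat_rcons; split => //.
by rewrite /sorted cat_path /= px pt andbT; exact/asboolP.
Qed.

Lemma konig roots :
  (forall n, exists2 s, rooted_paths roots n s & forall y, y \in s -> Z y) ->
  exists g, inf_sa_path adj g /\ forall m, Z (g m).
Proof.
move=> rooted.
have [r _ ext_r] : exists2 r, r \in roots & extensible [:: r].
  apply: antitone_pigeonhole => [y n m mn [t nt Zt]|n].
    by exists t => //; exact: leq_trans nt.
  have [_ [x [t [-> xr nt ut pt]]] Zs] := rooted n.
  by exists x => //; exists t.
have [next nextP] : {next : seq V -> V &
    forall s, s != [::] -> extensible s -> extensible (rcons s (next s))}.
  apply: (@choice _ _ (fun s y => s != [::] -> extensible s -> extensible (rcons s y))).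
  move=> s.
  have [[sn es]|nse] := pselect (s != [::] /\ extensible s).
    by have [y ey] := extensible_rcons sn es; exists y.
  by exists r => sn es; exfalso; exact: nse.
pose pre k := iter k (fun s => rcons s (next s)) [:: r].
have pre_size k : size (pre k) = k.+1 by elim: k => //= k IH; rewrite size_rcons IH.
have pre_ext k : extensible (pre k).
  by elim: k => //= k IH; apply: nextP => //; rewrite -size_eq0 pre_size.
have pre_Z k : Zpath (pre k) by have [t _ /Zpath_prefix] := pre_ext k 0%N.
have pre_nth k m : (m <= k)%N -> nth r (pre k) m = nth r (pre m) m.
  elim: k => [|k IH]; first by rewrite leqn0 => /eqP ->.
  rewrite leq_eqVlt => /predU1P[-> //|mk].
  by rewrite /= nth_rcons pre_size mk IH.
exists (fun m => nth r (pre m) m); split; [split|] => [i j /= eq_ij|m /=|m /=].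
- have [uk _ _] := pre_Z (maxn i j).
  rewrite -(pre_nth (maxn i j) i) ?leq_maxl // -(pre_nth (maxn i j) j) ?leq_maxr //
    in eq_ij.
  by apply/eqP; rewrite -(nth_uniq r _ _ uk) ?pre_size ?ltnS ?leq_maxl ?leq_maxr ?eq_ij.
- have [_ /(sortedP r) adj_m _] := pre_Z m.+1.
  by rewrite -(pre_nth m.+1 m) //; apply/asboolP; apply: adj_m; rewrite pre_size.
- by have [_ _ Zm] := pre_Z m; apply: Zm; rewrite mem_nth // pre_size.
Qed.
End konig.

Lemma has_inf_retained_path_measurable (V : countType) (adj : V -> V -> Prop)
    (lf : locally_finite adj) d (T : measurableType d) (Z : T -> set V) :
  (forall x, measurable [set t | Z t x]) ->
  measurable [set t | has_inf_retained_path adj (Z t)].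
Proof.
move=> mZ.
have -> : [set t | has_inf_retained_path adj (Z t)] =
    \bigcup_x0 \bigcap_n word_event Z (rooted_paths adj [:: x0] n).
  apply/seteqP; split => t.
    move=> [g [[ig ag] Zg]]; exists (g 0%N) => // n _.
    exists [seq g i | i <- iota 0 n.+1]; last by move=> _ /mapP[i _ ->].
    exists (g 0%N), [seq g i | i <- iota 1 n]; split => //.
    - by rewrite mem_head.
    - by rewrite size_map size_iota.
    - by rewrite map_inj_uniq ?iota_uniq.
    - exact: path_iota.
  by move=> [x0 _ rooted]; apply: (konig lf (roots := [:: x0])) => n; exact: rooted.
apply: countable_bigcupT_measurable => [|x0]; first exact: countableP.
by apply: bigcapT_measurable => n; exact: word_event_measurable.
Qed.

Section lifted_paths.
Context (VL VS : countType) (adjL : VL -> VL -> Prop) (adjS : VS -> VS -> Prop)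
  (pi : VL -> VS) (Phi : (nat -> VS) -> nat * (nat -> VL)).
Hypothesis Phi_lift : forall gamma, inf_sa_path adjS gamma ->
  inf_sa_path_from adjL (Phi gamma).1 (Phi gamma).2 /\
  forall m, ((Phi gamma).1 <= m)%N -> pi ((Phi gamma).2 m) = gamma m.

(* Roots are restricted to the first [N] vertices so that König's lemma applies. *)
Definition lift_words (N n : nat) : set (seq VL) :=
  [set s | rooted_paths adjL (enum_below N) n s /\ uniq (map pi s)].

Lemma lift_words_nondecreasing (T : Type) (Z : T -> set VL) :
  nondecreasing_seq (fun N => \bigcap_n word_event Z (lift_words N n)).
Proof.
move=> N N' NN'; apply/subsetPset => t Zt n _.
have [s [[x [u [-> xN nu us pu]]] ps] Zs] := Zt n I.
exists (x :: u) => //; split => //; exists x, u; split => //.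
by move: xN; rewrite !mem_enum_below => /leq_trans; apply.
Qed.

Lemma lift_words_nonincreasing (T : Type) (Z : T -> set VL) N :
  nonincreasing_seq (fun n => word_event Z (lift_words N n)).
Proof.
move=> n n' nn'; apply/subsetPset => t [_ [[x [u [-> xN nu us pu]]] ps] Zs].
by exists (x :: u) => //; split => //; exists x, u; split => //; exact: leq_trans nu.
Qed.

Lemma retained_path_lifts (Y : set VS) :
  has_inf_retained_path adjS Y ->
  exists N, forall n, word_event (fun Y => pi @^-1` Y) (lift_words N n) Y.
Proof.
move=> [g [pg Yg]]; have [[_ f_adj] f_pi] := Phi_lift pg.
set k := (Phi g).1 in f_adj f_pi; set f := (Phi g).2 in f_adj f_pi.
have pi_f n : [seq pi x | x <- [seq f i | i <- iota k n]] = [seq g i | i <- iota k n].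
  rewrite -map_comp; apply/eq_in_map => i; rewrite mem_iota => /andP[ki _].
  exact: f_pi.
exists (pickle (f k)).+1 => n; exists [seq f i | i <- iota k n.+1]; last first.
  by move=> x /mapP[i]; rewrite mem_iota => /andP[ki _] ->; rewrite /preimage /= f_pi.
have uf : uniq (map pi [seq f i | i <- iota k n.+1]).
  by rewrite pi_f map_inj_uniq ?iota_uniq //; case: pg.
split => //; exists (f k), [seq f i | i <- iota k.+1 n]; split => //.
- by rewrite mem_enum_below.
- by rewrite size_map size_iota.
- exact: map_uniq uf.
- exact: path_iota.
Qed.

Hypothesis lfL : locally_finite adjL.

Lemma lifts_retained_path (X : set VL) N :
  (forall n, word_event id (lift_words N n) X) -> has_inf_retained_path adjL X.
Proof.
move=> lifts; apply: (konig lfL (roots := enum_below N)) => n.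
by have [s [rs _] Xs] := lifts n; exists s.
Qed.

End lifted_paths.

Theorem theorem4p2 (R : realType) (VL VS : countType)
  (adjL : VL -> VL -> Prop) (adjS : VS -> VS -> Prop)
  (hL : simple_graph adjL) (hS : simple_graph adjS)
  (lfL : locally_finite adjL) (lfS : locally_finite adjS)
  (pi : VL -> VS) (pi_surj : forall v, exists x, pi x = v)
  (Phi : (nat -> VS) -> nat * (nat -> VL))
  (Phi_meas : lift_measurable adjS Phi)
  (Phi_lift : forall gamma, inf_sa_path adjS gamma ->
     inf_sa_path_from adjL (Phi gamma).1 (Phi gamma).2 /\
     forall m, ((Phi gamma).1 <= m)%N -> pi ((Phi gamma).2 m) = gamma m)
  (p : VS -> R) (p01 : forall v, 0 <= p v <= 1)
  (dS : measure_display) (OmegaS : measurableType dS)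
  (PS : probability OmegaS R) (Y : OmegaS -> set VS)
  (Y_meas : forall v, measurable [set w | Y w v])
  (Y_prob : forall v, PS [set w | Y w v] = (p v)%:E)
  (Y_indep : indep_events PS (fun v => [set w | Y w v]))
  (dL : measure_display) (OmegaL : measurableType dL)
  (PL : probability OmegaL R) (X : OmegaL -> set VL)
  (X_meas : forall x, measurable [set w | X w x])
  (X_indep : indep_sigma PL (fibre_sigma X pi))
  (X_prob : forall x, ((p (pi x))%:E <= PL [set w | X w x])%E) :
  (PS [set w | has_inf_retained_path adjS (Y w)] <=
   PL [set w | has_inf_retained_path adjL (X w)])%E.
Proof.
pose A N n := word_event (fun t => pi @^-1` Y t) (lift_words adjL pi N n).
pose B N n := word_event X (lift_words adjL pi N n).
have mA N n : measurable (A N n).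
  by apply: word_event_measurable => w x _ _; exact: Y_meas.
have mB N n : measurable (B N n) by exact: word_event_measurable.
have S_sub : [set t | has_inf_retained_path adjS (Y t)] `<=` \bigcup_N \bigcap_n A N n.
  move=> t /(retained_path_lifts Phi_lift)[N lifts].
  by exists N => // n _; exact: lifts.
have L_sup N : \bigcap_n B N n `<=` [set t | has_inf_retained_path adjL (X t)].
  by move=> t lifts; apply: (lifts_retained_path lfL (N := N)) => n; exact: lifts.
have mS := has_inf_retained_path_measurable lfS Y_meas.
have mL := has_inf_retained_path_measurable lfL X_meas.
apply: le_trans (le_measure _ _ _ S_sub) _; rewrite ?inE //.
  by apply: bigcupT_measurable => N; exact: bigcapT_measurable.
apply: measure_bigcup_nondecreasing_le => [N||N].
- exact: bigcapT_measurable.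
- exact: lift_words_nondecreasing.
apply: le_trans (le_measure _ _ _ (L_sup N)); rewrite ?inE //; last first.
  exact: bigcapT_measurable.
apply: measure_bigcap_nonincreasing_ge => // [|n].
  exact: lift_words_nonincreasing.
apply: le_trans (word_event_le Y_meas Y_prob Y_indep X_meas X_indep X_prob _).
  rewrite le_measure ?inE //; first exact: bigcapT_measurable.
    exact: mA.
  exact: bigcap_inf.
by move=> w [].
Qed.
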